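(* Let $(V,\|\cdot\|)$ be a normed plane. For every $x\in S$, the inner bisector $\mathrm{bis_I}(-x,x)$ is a curve homeomorphic to a closed (compact) interval.
   Context: A normed (Minkowski) plane $(V,\|\cdot\|)$ is a two-dimensional real vector space with a norm; $B=\{v:\|v\|\le1\}$ is its unit ball and $S=\{v:\|v\|=1\}$ its unit circle. For distinct $x,y$, $\mathrm{bis}(x,y)=\{z\in V:\|z-x\|=\|z-y\|\}$. For $x\in S$, the inner bisector is $\mathrm{bis_I}(-x,x)=\mathrm{bis}(-x,x)\cap B$. *)

From Stdlib Require Import Reals Lra.
Open Scope R_scope.

(* The plane V is modelled as R*R (every 2-dim real vector space is
   linearly isomorphic to R^2, and the norm is arbitrary). *)
Definition vec := (R * R)%type.
Definition vadd (v w : vec) : vec := (fst v + fst w, snd v + snd w).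
Definition vscal (a : R) (v : vec) : vec := (a * fst v, a * snd v).
Definition vopp (v : vec) : vec := vscal (-1) v.
Definition vsub (v w : vec) : vec := vadd v (vopp w).
Definition vzero : vec := (0, 0).

Record is_norm (N : vec -> R) : Prop := {
  norm_nonneg : forall v, 0 <= N v;
  norm_definite : forall v, N v = 0 -> v = vzero;
  norm_hom : forall a v, N (vscal a v) = Rabs a * N v;
  norm_triangle : forall v w, N (vadd v w) <= N v + N w
}.

Definition unit_ball (N : vec -> R) (v : vec) : Prop := N v <= 1.
Definition unit_circle (N : vec -> R) (v : vec) : Prop := N v = 1.

Definition bisector (N : vec -> R) (x y : vec) (z : vec) : Prop :=
  N (vsub z x) = N (vsub z y).

Definition inner_bisector (N : vec -> R) (x : vec) (z : vec) : Prop :=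
  bisector N (vopp x) x z /\ unit_ball N z.

(* A subset A of the normed plane is homeomorphic to the compact interval
   [0,1] (topology of the plane = norm topology; topology of A and of [0,1]
   are the subspace topologies). *)
Definition homeomorphic_to_unit_interval (N : vec -> R) (A : vec -> Prop) : Prop :=
  exists (f : R -> vec) (g : vec -> R),
    (forall t, 0 <= t <= 1 -> A (f t)) /\
    (forall z, A z -> 0 <= g z <= 1) /\
    (forall t, 0 <= t <= 1 -> g (f t) = t) /\
    (forall z, A z -> f (g z) = z) /\
    (forall t0, 0 <= t0 <= 1 -> forall eps, 0 < eps -> exists delta, 0 < delta /\
        forall t, 0 <= t <= 1 -> Rabs (t - t0) < delta -> N (vsub (f t) (f t0)) < eps) /\
    (forall z0, A z0 -> forall eps, 0 < eps -> exists delta, 0 < delta /\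
        forall z, A z -> N (vsub z z0) < delta -> Rabs (g z - g z0) < eps).

(* Write points as [s perp + t x] with [perp] orthogonal to [x] in the Euclidean sense.
   Two points [z], [w] of the inner bisector with [w - z - e x = d], [e >= 0], satisfy
   [e^2 <= (2 + e) N d]; so each line parallel to [x] meets the inner bisector at most once,
   and [t] depends Hölder-continuously on [s].  The set of attained [s] is symmetric, bounded
   and closed; it is star-shaped about [0], because [{q | N (q - a) <= N (q - b)}] is
   star-shaped about [a] and the intermediate value theorem applies on segments parallel
   to [x]; and it contains a positive number.  Hence it is an interval [[-sp, sp]] with
   [sp > 0], and [s] parametrises the inner bisector homeomorphically. *)

From Stdlib Require Import Reals Lra Psatz Classical ClassicalEpsilon.
Open Scope R_scope.

Lemma vec_ext (u v : vec) : fst u = fst v -> snd u = snd v -> u = v.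
Proof. destruct u, v; cbn; intros -> ->; reflexivity. Qed.

Ltac vec_ring := apply vec_ext; cbn; ring.

Lemma continuity_lipschitz (f : R -> R) (L : R) : 0 <= L ->
  (forall a b, Rabs (f a - f b) <= L * Rabs (a - b)) -> continuity f.
Proof.
  intros HL Hf a eps Heps.
  exists (eps / (L + 1)); split; [apply Rdiv_lt_0_compat; lra|].
  intros b [_ Hb]; cbn in *; unfold Rdist in *.
  apply Rle_lt_trans with (L * Rabs (b - a)); [apply Hf|].
  apply Rle_lt_trans with ((L + 1) * Rabs (b - a)); [pose proof (Rabs_pos (b - a)); nra|].
  apply Rmult_lt_reg_l with (/ (L + 1)); [apply Rinv_0_lt_compat; lra|].
  rewrite <- Rmult_assoc, Rinv_l by lra. unfold Rdiv in Hb. lra.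
Qed.

Lemma small_of_lin_sqrt_bound (A B eps : R) : 0 <= A -> 0 <= B -> 0 < eps ->
  exists delta, 0 < delta /\ forall d e, Rabs d < delta -> e * e <= B * Rabs d ->
    A * Rabs d + Rabs e < eps.
Proof.
  intros HA HB He.
  exists (Rmin (eps / (2 * (A + 1))) (eps * eps / (8 * (B + 1)))).
  split; [apply Rmin_glb_lt; apply Rdiv_lt_0_compat; nra|].
  intros d e Hd Hde.
  pose proof (Rabs_pos d) as Hd0.
  assert (Hd1 : Rabs d * (2 * (A + 1)) < eps).
  { apply Rlt_le_trans with (eps / (2 * (A + 1)) * (2 * (A + 1))); [|right; field; lra].
    apply Rmult_lt_compat_r; [lra|]. eapply Rlt_le_trans; [exact Hd|apply Rmin_l]. }
  assert (Hd2 : Rabs d * (8 * (B + 1)) <= eps * eps).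
  { apply Rle_trans with (eps * eps / (8 * (B + 1)) * (8 * (B + 1))); [|right; field; lra].
    apply Rmult_le_compat_r; [lra|]. left; eapply Rlt_le_trans; [exact Hd|apply Rmin_r]. }
  assert (He2 : e * e < eps / 2 * (eps / 2)) by nra.
  assert (He3 : Rabs e < eps / 2) by (apply Rabs_def1; nra).
  nra.
Qed.

Lemma Cauchy_crit_of_sqr_le (u v : nat -> R) (K : R) : 0 <= K ->
  (forall n m, (u n - u m) * (u n - u m) <= K * Rabs (v n - v m)) ->
  Cauchy_crit v -> Cauchy_crit u.
Proof.
  intros HK Huv Hv eps He.
  destruct (small_of_lin_sqrt_bound 0 K eps) as [delta [Hdelta Hsmall]]; try lra.
  destruct (Hv delta Hdelta) as [n0 Hn0].
  exists n0; intros n m Hn Hm; unfold Rdist.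
  specialize (Hsmall (v n - v m) (u n - u m) (Hn0 n m Hn Hm) (Huv n m)). lra.
Qed.

Lemma sub_pow_half_bounds a n : 0 < a -> 0 <= a - a / 2 ^ n < a.
Proof.
  intros Ha. pose proof (pow_R1_Rle 2 n) as Hpow.
  assert (0 < a / 2 ^ n) by (apply Rdiv_lt_0_compat; lra).
  assert (a / 2 ^ n <= a).
  { apply Rmult_le_reg_r with (2 ^ n); [lra|]. unfold Rdiv. rewrite Rmult_assoc, Rinv_l; nra. }
  lra.
Qed.

Lemma Un_cv_sub_pow_half a : Un_cv (fun n => a - a / 2 ^ n) a.
Proof.
  intros eps He. destruct (cv_pow_half a eps He) as [n0 Hn0]. exists n0. intros n Hn.
  specialize (Hn0 n Hn). unfold Rdist in *.
  replace (a - a / 2 ^ n - a) with (- (a / 2 ^ n - 0)) by ring.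
  rewrite Rabs_Ropp. exact Hn0.
Qed.

Lemma Rabs_le_between a b : Rabs a <= b -> - b <= a <= b.
Proof. pose proof (Rle_abs a). pose proof (Rle_abs (- a)). rewrite Rabs_Ropp in *. lra. Qed.

Lemma le_of_forall_le_add (a b : R) : (forall eps, 0 < eps -> a <= b + eps) -> a <= b.
Proof. intros H. apply Rnot_lt_le. intros Hba. specialize (H ((a - b) / 2)). lra. Qed.

Section NormedPlane.

Variable N : vec -> R.
Hypothesis HN : is_norm N.

Lemma norm_scal_nonneg a v : 0 <= a -> N (vscal a v) = a * N v.
Proof. intros Ha. rewrite (norm_hom _ HN), Rabs_pos_eq; auto. Qed.

Lemma norm_vzero : N vzero = 0.
Proof. replace vzero with (vscal 0 vzero) by vec_ring. rewrite norm_scal_nonneg; lra. Qed.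

Lemma norm_opp v : N (vopp v) = N v.
Proof.
  unfold vopp. rewrite (norm_hom _ HN).
  replace (Rabs (-1)) with 1 by (rewrite Rabs_left; lra). ring.
Qed.

Lemma norm_sub_sym u v : N (vsub u v) = N (vsub v u).
Proof. rewrite <- norm_opp. f_equal. vec_ring. Qed.

Lemma norm_le_add_sub u v : N u <= N v + N (vsub u v).
Proof. replace u with (vadd v (vsub u v)) at 1 by vec_ring. apply (norm_triangle _ HN). Qed.

Lemma norm_add3 u v w : N (vadd (vadd u v) w) <= N u + N v + N w.
Proof.
  eapply Rle_trans; [apply (norm_triangle _ HN)|].
  pose proof (norm_triangle _ HN u v). lra.
Qed.

Lemma norm_reverse_triangle u v : Rabs (N u - N v) <= N (vsub u v).
Proof.
  pose proof (norm_le_add_sub u v) as Huv. pose proof (norm_le_add_sub v u) as Hvu.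
  rewrite norm_sub_sym in Hvu. apply Rabs_le; lra.
Qed.

Lemma norm_pos v : v <> vzero -> 0 < N v.
Proof.
  intros Hv. destruct (norm_nonneg _ HN v) as [|H]; auto.
  exfalso. apply Hv, (norm_definite _ HN). auto.
Qed.

Definition seg (a b : vec) (l : R) : vec := vadd (vscal (1 - l) a) (vscal l b).

Lemma norm_seg_le a b l r : 0 <= l <= 1 -> N a <= r -> N b <= r -> N (seg a b l) <= r.
Proof.
  intros Hl Ha Hb. unfold seg.
  eapply Rle_trans; [apply (norm_triangle _ HN)|].
  rewrite !norm_scal_nonneg by lra. nra.
Qed.

Lemma closer_seg a b q mu : 0 <= mu <= 1 -> N (vsub q a) <= N (vsub q b) ->
  N (vsub (seg a q mu) a) <= N (vsub (seg a q mu) b).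
Proof.
  intros Hmu Hq.
  assert (HA : N (vsub (seg a q mu) a) = mu * N (vsub q a)).
  { rewrite <- norm_scal_nonneg by lra. f_equal. vec_ring. }
  assert (Hqb : mu * N (vsub q b) <=
    mu * N (vsub (seg a q mu) b) + (1 - mu) * N (vsub (seg a q mu) a)).
  { rewrite <- !norm_scal_nonneg by lra.
    replace (vscal mu (vsub q b))
      with (vadd (vscal mu (vsub (seg a q mu) b)) (vscal (1 - mu) (vsub (seg a q mu) a)))
      by (unfold seg; vec_ring).
    apply (norm_triangle _ HN). }
  pose proof (norm_nonneg _ HN (vsub q a)).
  destruct (Req_dec mu 0) as [->|Hmu0].
  - rewrite HA, Rmult_0_l. apply (norm_nonneg _ HN).
  - assert (mu * N (vsub (seg a q mu) a) <= mu * N (vsub (seg a q mu) b)) by nra.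
    apply Rmult_le_reg_l with mu; lra.
Qed.

Lemma seg_IVT (h : vec -> R) (L : R) a b : 0 <= L ->
  (forall u v, Rabs (h u - h v) <= L * N (vsub u v)) -> h a <= 0 -> 0 <= h b ->
  exists l, 0 <= l <= 1 /\ h (seg a b l) = 0.
Proof.
  intros HL Hh Ha Hb.
  assert (Hc : continuity (fun l => h (seg a b l))).
  { apply (continuity_lipschitz _ (L * N (vsub b a))).
    - pose proof (norm_nonneg _ HN (vsub b a)). nra.
    - intros l l'. eapply Rle_trans; [apply Hh|].
      replace (vsub (seg a b l) (seg a b l')) with (vscal (l - l') (vsub b a))
        by (unfold seg; vec_ring).
      rewrite (norm_hom _ HN). right; ring. }
  destruct (IVT_cor _ 0 1 Hc) as [l Hl]; [lra| |exists l; exact Hl].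
  replace (seg a b 0) with a by (unfold seg; vec_ring).
  replace (seg a b 1) with b by (unfold seg; vec_ring). nra.
Qed.

Variable x : vec.
Hypothesis hx : N x = 1.

Definition bis_gap (z : vec) : R := N (vadd z x) - N (vsub z x).

Lemma bis_gap_sub z : bis_gap z = N (vsub z (vopp x)) - N (vsub z x).
Proof. unfold bis_gap. replace (vsub z (vopp x)) with (vadd z x) by vec_ring. reflexivity. Qed.

Lemma inner_bisector_iff z : inner_bisector N x z <-> bis_gap z = 0 /\ N z <= 1.
Proof.
  unfold inner_bisector, bisector, unit_ball. rewrite bis_gap_sub.
  split; intros [H1 H2]; split; lra.
Qed.

Lemma bis_gap_lipschitz u v : Rabs (bis_gap u - bis_gap v) <= 2 * N (vsub u v).
Proof.
  unfold bis_gap.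
  pose proof (norm_reverse_triangle (vadd u x) (vadd v x)) as H1.
  pose proof (norm_reverse_triangle (vsub u x) (vsub v x)) as H2.
  replace (vsub (vadd u x) (vadd v x)) with (vsub u v) in H1 by vec_ring.
  replace (vsub (vsub u x) (vsub v x)) with (vsub u v) in H2 by vec_ring.
  replace (N (vadd u x) - N (vsub u x) - (N (vadd v x) - N (vsub v x)))
    with ((N (vadd u x) - N (vadd v x)) - (N (vsub u x) - N (vsub v x))) by ring.
  eapply Rle_trans; [apply Rabs_triang|]. rewrite Rabs_Ropp. lra.
Qed.

Lemma bis_gap_vopp_x : bis_gap (vopp x) = -2.
Proof.
  unfold bis_gap.
  replace (vadd (vopp x) x) with vzero by vec_ring.
  replace (vsub (vopp x) x) with (vscal (-2) x) by vec_ring.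
  rewrite norm_vzero, (norm_hom _ HN), hx.
  replace (Rabs (-2)) with 2 by (rewrite Rabs_left; lra). ring.
Qed.

Lemma bis_gap_x : bis_gap x = 2.
Proof.
  unfold bis_gap.
  replace (vsub x x) with vzero by vec_ring.
  replace (vadd x x) with (vscal 2 x) by vec_ring.
  rewrite norm_vzero, norm_scal_nonneg, hx by lra. ring.
Qed.

Lemma inner_bisector_vzero : inner_bisector N x vzero.
Proof.
  apply inner_bisector_iff. unfold bis_gap. rewrite norm_vzero. split; [|lra].
  replace (vsub vzero x) with (vopp (vadd vzero x)) by vec_ring.
  rewrite norm_opp. ring.
Qed.

Lemma inner_bisector_vopp z : inner_bisector N x z -> inner_bisector N x (vopp z).
Proof.
  rewrite !inner_bisector_iff. unfold bis_gap. intros [Hz Hz1].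
  replace (vadd (vopp z) x) with (vopp (vsub z x)) by vec_ring.
  replace (vsub (vopp z) x) with (vopp (vadd z x)) by vec_ring.
  rewrite !norm_opp. lra.
Qed.

Lemma inner_bisector_closed z0 :
  (forall eps, 0 < eps -> exists z, inner_bisector N x z /\ N (vsub z z0) < eps) ->
  inner_bisector N x z0.
Proof.
  intros Happrox. apply inner_bisector_iff. split.
  - assert (Rabs (bis_gap z0) <= 0).
    { apply le_of_forall_le_add. intros eps He.
      destruct (Happrox (eps / 2)) as [z [Hz Hzz0]]; [lra|].
      apply inner_bisector_iff in Hz as [Hz _].
      pose proof (bis_gap_lipschitz z0 z) as Hlip.
      rewrite Hz, Rminus_0_r, norm_sub_sym in Hlip. lra. }
    pose proof (Rabs_pos (bis_gap z0)).
    destruct (Req_dec (bis_gap z0) 0) as [|Hne]; auto.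
    pose proof (Rabs_pos_lt _ Hne). lra.
  - apply le_of_forall_le_add. intros eps He.
    destruct (Happrox eps He) as [z [Hz Hzz0]].
    apply inner_bisector_iff in Hz as [_ Hz].
    pose proof (norm_le_add_sub z0 z) as Htri. rewrite norm_sub_sym in Htri. lra.
Qed.

(* The triangle inequality applied to [(2+e) x = (w+x) - (z-x) - d],
   [(1+e)(z+x) = e z + (w+x) - d] and [(1+e)(w-x) = e w + (z-x) + d], where [d] is the
   defect [w - z - e x], combined with [N (z+x) = N (z-x)] and [N (w+x) = N (w-x)]. *)
Lemma inner_bisector_holder z w eps :
  inner_bisector N x z -> inner_bisector N x w -> 0 <= eps ->
  eps * eps <= (2 + eps) * N (vsub (vsub w z) (vscal eps x)).
Proof.
  rewrite !inner_bisector_iff. unfold bis_gap. intros [Bz Kz] [Bw Kw] He.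
  set (d := vsub (vsub w z) (vscal eps x)).
  pose proof (norm_opp d) as Hd.
  assert (Hi : 2 + eps <= N (vadd w x) + N (vsub z x) + N d).
  { replace (2 + eps) with (N (vscal (2 + eps) x))
      by (rewrite norm_scal_nonneg, hx by lra; ring).
    replace (vscal (2 + eps) x) with (vadd (vadd (vadd w x) (vopp (vsub z x))) (vopp d))
      by (unfold d; vec_ring).
    eapply Rle_trans; [apply norm_add3|]. rewrite !norm_opp. lra. }
  assert (Hii : (1 + eps) * N (vadd z x) <= eps + N (vadd w x) + N d).
  { rewrite <- norm_scal_nonneg by lra.
    replace (vscal (1 + eps) (vadd z x)) with (vadd (vadd (vscal eps z) (vadd w x)) (vopp d))
      by (unfold d; vec_ring).
    eapply Rle_trans; [apply norm_add3|]. rewrite norm_opp, norm_scal_nonneg by lra. nra. }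
  assert (Hiii : (1 + eps) * N (vsub w x) <= eps + N (vsub z x) + N d).
  { rewrite <- norm_scal_nonneg by lra.
    replace (vscal (1 + eps) (vsub w x)) with (vadd (vadd (vscal eps w) (vsub z x)) d)
      by (unfold d; vec_ring).
    eapply Rle_trans; [apply norm_add3|]. rewrite norm_scal_nonneg by lra. nra. }
  nra.
Qed.

Lemma inner_bisector_seg a b : N a <= 1 -> N b <= 1 -> bis_gap a <= 0 -> 0 <= bis_gap b ->
  exists l, 0 <= l <= 1 /\ inner_bisector N x (seg a b l).
Proof.
  intros Ha Hb Hga Hgb.
  destruct (seg_IVT bis_gap 2 a b) as [l [Hl Hgap]]; auto; [lra|apply bis_gap_lipschitz|].
  exists l. split; auto. apply inner_bisector_iff. split; auto. apply norm_seg_le; auto.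
Qed.

Lemma inner_bisector_shrink z mu : inner_bisector N x z -> 0 <= mu <= 1 ->
  exists c, inner_bisector N x (vadd (vscal mu z) (vscal c x)).
Proof.
  intros Hz Hmu. apply inner_bisector_iff in Hz as [Bz Kz]. rewrite bis_gap_sub in Bz.
  assert (Hseg : forall e, N e <= 1 -> N (seg e z mu) <= 1) by (intros; apply norm_seg_le; auto).
  destruct (inner_bisector_seg (seg (vopp x) z mu) (seg x z mu)) as [l [Hl Hbis]].
  - apply Hseg. rewrite norm_opp; lra.
  - apply Hseg. lra.
  - rewrite bis_gap_sub.
    enough (N (vsub (seg (vopp x) z mu) (vopp x)) <= N (vsub (seg (vopp x) z mu) x)) by lra.
    apply closer_seg; lra.
  - rewrite bis_gap_sub.
    enough (N (vsub (seg x z mu) x) <= N (vsub (seg x z mu) (vopp x))) by lra.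
    apply closer_seg; lra.
  - exists ((1 - mu) * (2 * l - 1)).
    replace (vadd (vscal mu z) (vscal ((1 - mu) * (2 * l - 1)) x))
      with (seg (seg (vopp x) z mu) (seg x z mu) l) by (unfold seg; vec_ring).
    exact Hbis.
Qed.

(* [ell] and [tau] are the coordinates in the basis [perp, x] (see [coord_ell_tau]). *)
Definition perp : vec := (- snd x, fst x).
Definition coord (s t : R) : vec := vadd (vscal s perp) (vscal t x).
Definition ell (v : vec) : R :=
  (fst x * snd v - snd x * fst v) / (fst x * fst x + snd x * snd x).
Definition tau (v : vec) : R :=
  (fst x * fst v + snd x * snd v) / (fst x * fst x + snd x * snd x).

Lemma x_sqr_pos : 0 < fst x * fst x + snd x * snd x.
Proof.
  assert (Hx : x <> vzero) by (intros E; rewrite E, norm_vzero in hx by auto; lra).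
  destruct (Req_dec (fst x) 0); destruct (Req_dec (snd x) 0); try nra.
  exfalso. apply Hx, vec_ext; cbn; auto.
Qed.

Ltac coord_field := unfold coord, perp, ell, tau; cbn; field; apply Rgt_not_eq, x_sqr_pos.

Lemma coord_ell_tau v : v = coord (ell v) (tau v).
Proof. apply vec_ext; coord_field. Qed.

Lemma ell_coord s t : ell (coord s t) = s.
Proof. coord_field. Qed.

Lemma tau_coord s t : tau (coord s t) = t.
Proof. coord_field. Qed.

Lemma ell_lin a b u v : ell (vadd (vscal a u) (vscal b v)) = a * ell u + b * ell v.
Proof. coord_field. Qed.

Lemma ell_scal a v : ell (vscal a v) = a * ell v.
Proof. coord_field. Qed.

Lemma ell_seg a b l : ell (seg a b l) = (1 - l) * ell a + l * ell b.
Proof. apply ell_lin. Qed.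

Lemma ell_perp : ell perp = 1.
Proof. coord_field. Qed.

Lemma ell_sub u v : ell (vsub u v) = ell u - ell v.
Proof. coord_field. Qed.

Lemma ell_x : ell x = 0.
Proof. coord_field. Qed.

Lemma coord_sub s t s' t' : vsub (coord s t) (coord s' t') = coord (s - s') (t - t').
Proof. unfold coord. vec_ring. Qed.

Lemma coord_neq_vzero s t : s <> 0 -> coord s t <> vzero.
Proof.
  intros Hs E. apply Hs. rewrite <- (ell_coord s t), E. coord_field.
Qed.

Lemma norm_perp_pos : 0 < N perp.
Proof.
  apply norm_pos. replace perp with (coord 1 0) by (unfold coord; vec_ring).
  apply coord_neq_vzero. lra.
Qed.

Lemma norm_coord_le s t : N (coord s t) <= Rabs s * N perp + Rabs t.
Proof.
  unfold coord. eapply Rle_trans; [apply (norm_triangle _ HN)|].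
  rewrite !(norm_hom _ HN), hx. lra.
Qed.

Lemma vsub_tau v : vsub v (vscal (tau v) x) = vscal (ell v) perp.
Proof. apply vec_ext; coord_field. Qed.

Lemma abs_tau_le v : Rabs (tau v) <= N v + Rabs (ell v) * N perp.
Proof.
  replace (Rabs (tau v)) with (N (vscal (tau v) x)) by (rewrite (norm_hom _ HN), hx; ring).
  eapply Rle_trans; [apply (norm_le_add_sub _ v)|].
  rewrite norm_sub_sym, vsub_tau, (norm_hom _ HN). lra.
Qed.

(* [N (coord 1 u)] has a positive minimum on [[-2 N perp, 2 N perp]] and is at least
   [N perp] outside it. *)
Lemma ell_bounded : exists C, 0 < C /\ forall v, Rabs (ell v) <= C * N v.
Proof.
  pose proof norm_perp_pos as Hp.
  set (m := fun u => N (coord 1 u)).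
  assert (Hm : continuity m).
  { apply (continuity_lipschitz _ 1); [lra|]. intros a b. unfold m.
    replace (Rabs (a - b)) with (N (vsub (coord 1 a) (coord 1 b))).
    - rewrite Rmult_1_l. apply norm_reverse_triangle.
    - replace (vsub (coord 1 a) (coord 1 b)) with (vscal (a - b) x) by (unfold coord; vec_ring).
      rewrite (norm_hom _ HN), hx. ring. }
  destruct (continuity_ab_min m (- (2 * N perp)) (2 * N perp)) as [u0 [Hu0 _]];
    [lra|intros; apply Hm|].
  assert (Hm0 : 0 < m u0)
    by (apply norm_pos, coord_neq_vzero; lra).
  set (c := Rmin (m u0) (N perp)).
  assert (Hc : forall u, c <= m u).
  { intros u. destruct (Rle_dec (Rabs u) (2 * N perp)) as [Hu|Hu].
    - apply Rle_trans with (m u0); [apply Rmin_l|]. apply Hu0, Rabs_le_between, Hu.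
    - apply Rle_trans with (N perp); [apply Rmin_r|].
      pose proof (abs_tau_le (coord 1 u)) as Ht. rewrite tau_coord, ell_coord, Rabs_R1 in Ht.
      unfold m. lra. }
  assert (Hc0 : 0 < c) by (apply Rmin_glb_lt; lra).
  exists (/ c). split; [apply Rinv_0_lt_compat, Hc0|].
  intros v. rewrite (coord_ell_tau v) at 2.
  destruct (Req_dec (ell v) 0) as [E|E].
  - rewrite E, Rabs_R0. pose proof (norm_nonneg _ HN (coord 0 (tau v))).
    pose proof (Rinv_0_lt_compat _ Hc0). nra.
  - replace (coord (ell v) (tau v)) with (vscal (ell v) (coord 1 (tau v / ell v)))
      by (apply vec_ext; unfold coord; cbn; field; auto).
    rewrite (norm_hom _ HN).
    apply Rmult_le_reg_l with c; [exact Hc0|].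
    rewrite <- Rmult_assoc, Rinv_r, Rmult_1_l by lra.
    pose proof (Hc (tau v / ell v)). pose proof (Rabs_pos (ell v)). unfold m in *. nra.
Qed.

Lemma inner_bisector_tau_holder : exists K, 0 <= K /\ forall z w,
  inner_bisector N x z -> inner_bisector N x w ->
  (tau w - tau z) * (tau w - tau z) <= K * Rabs (ell w - ell z).
Proof.
  destruct ell_bounded as [C [HC Hell]]. pose proof norm_perp_pos as Hp.
  set (M := 1 + C * N perp).
  assert (Htau : forall z, inner_bisector N x z -> Rabs (tau z) <= M).
  { intros z Hz. apply inner_bisector_iff in Hz as [_ Hz].
    pose proof (abs_tau_le z). pose proof (Hell z).
    assert (Rabs (ell z) <= C) by nra.
    assert (Rabs (ell z) * N perp <= C * N perp) by (apply Rmult_le_compat_r; lra).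
    unfold M. lra. }
  assert (HM : 0 <= M) by (unfold M; nra).
  exists ((2 + 2 * M) * N perp). split; [nra|].
  assert (Hle : forall z w, inner_bisector N x z -> inner_bisector N x w -> tau z <= tau w ->
    (tau w - tau z) * (tau w - tau z) <= (2 + 2 * M) * N perp * Rabs (ell w - ell z)).
  { intros z w Hz Hw Hzw.
    pose proof (inner_bisector_holder z w (tau w - tau z) Hz Hw) as H.
    replace (vsub (vsub w z) (vscal (tau w - tau z) x)) with (vscal (ell w - ell z) perp) in H
      by (apply vec_ext; coord_field).
    rewrite (norm_hom _ HN) in H.
    pose proof (Rabs_le_between _ _ (Htau z Hz)). pose proof (Rabs_le_between _ _ (Htau w Hw)).
    pose proof (Rabs_pos (ell w - ell z)).
    assert (0 <= (2 * M - (tau w - tau z)) * (Rabs (ell w - ell z) * N perp))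
      by (apply Rmult_le_pos; nra).
    nra. }
  intros z w Hz Hw. destruct (Rle_dec (tau z) (tau w)).
  - apply Hle; auto.
  - replace ((tau w - tau z) * (tau w - tau z)) with ((tau z - tau w) * (tau z - tau w)) by ring.
    rewrite Rabs_minus_sym. apply Hle; auto. lra.
Qed.

Lemma inner_bisector_ell_inj z w : inner_bisector N x z -> inner_bisector N x w ->
  ell z = ell w -> z = w.
Proof.
  intros Hz Hw Hell. destruct inner_bisector_tau_holder as [K [_ HK]].
  specialize (HK z w Hz Hw). rewrite Hell, Rminus_diag, Rabs_R0, Rmult_0_r in HK.
  assert (Htau : tau z = tau w) by nra.
  rewrite (coord_ell_tau z), (coord_ell_tau w), Hell, Htau. reflexivity.
Qed.

Definition ell_image (s : R) : Prop := exists z, inner_bisector N x z /\ ell z = s.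

Lemma ell_image_bound : bound ell_image.
Proof.
  destruct ell_bounded as [C [HC Hell]]. exists C. intros s [z [Hz <-]].
  apply inner_bisector_iff in Hz as [_ Hz].
  pose proof (Hell z). pose proof (Rle_abs (ell z)). nra.
Qed.

Lemma ell_image_0 : ell_image 0.
Proof.
  exists vzero. split; [apply inner_bisector_vzero|].
  rewrite <- (ell_coord 0 0). f_equal. unfold coord. vec_ring.
Qed.

Lemma ell_image_opp s : ell_image s -> ell_image (- s).
Proof.
  intros [z [Hz <-]]. exists (vopp z). split; [apply inner_bisector_vopp, Hz|].
  unfold vopp. rewrite ell_scal. ring.
Qed.

Lemma ell_image_scale s mu : ell_image s -> 0 <= mu <= 1 -> ell_image (mu * s).
Proof.
  intros [z [Hz <-]] Hmu. destruct (inner_bisector_shrink z mu Hz Hmu) as [c Hc].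
  exists (vadd (vscal mu z) (vscal c x)). split; auto. rewrite ell_lin, ell_x. ring.
Qed.

Lemma ell_image_pos : exists s, 0 < s /\ ell_image s.
Proof.
  pose proof norm_perp_pos as Hp.
  set (y := vscal (/ N perp) perp).
  assert (Hy : N y = 1).
  { unfold y. rewrite norm_scal_nonneg by (left; apply Rinv_0_lt_compat; lra). field. lra. }
  assert (Hely : ell y = / N perp) by (unfold y; rewrite ell_scal, ell_perp; ring).
  assert (Hgap : forall z, inner_bisector N x z -> bis_gap z = 0)
    by (intros z Hz; apply inner_bisector_iff in Hz as [Hz _]; auto).
  destruct (Rle_dec 0 (bis_gap y)) as [Hgy|Hgy].
  - destruct (inner_bisector_seg (vopp x) y) as [l [Hl Hz]];
      [rewrite norm_opp; lra|lra|rewrite bis_gap_vopp_x; lra|auto|].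
    assert (Hl0 : l <> 0).
    { intros ->. apply Hgap in Hz.
      replace (seg (vopp x) y 0) with (vopp x) in Hz by (unfold seg; vec_ring).
      rewrite bis_gap_vopp_x in Hz; lra. }
    exists (l / N perp). split; [apply Rdiv_lt_0_compat; lra|].
    exists (seg (vopp x) y l). split; auto.
    rewrite ell_seg, Hely. unfold vopp. rewrite ell_scal, ell_x. field. lra.
  - destruct (inner_bisector_seg y x) as [l [Hl Hz]];
      [lra|lra|lra|rewrite bis_gap_x; lra|].
    assert (Hl1 : l <> 1).
    { intros ->. apply Hgap in Hz. replace (seg y x 1) with x in Hz by (unfold seg; vec_ring).
      rewrite bis_gap_x in Hz; lra. }
    exists ((1 - l) / N perp). split; [apply Rdiv_lt_0_compat; lra|].
    exists (seg y x l). split; auto.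
    rewrite ell_seg, Hely, ell_x. field. lra.
Qed.

Definition lift (s : R) : vec :=
  epsilon (inhabits vzero) (fun z => inner_bisector N x z /\ ell z = s).

Lemma lift_spec s : ell_image s -> inner_bisector N x (lift s) /\ ell (lift s) = s.
Proof. intros Hs. exact (epsilon_spec (inhabits vzero) _ Hs). Qed.

Section Sup.
Variable sp : R.
Hypothesis hsp : is_lub ell_image sp.

Lemma sup_pos : 0 < sp.
Proof.
  destruct ell_image_pos as [s [Hs Hims]]. destruct hsp as [Hub _].
  pose proof (Hub s Hims). lra.
Qed.

Lemma ell_image_lt_sup s : 0 <= s < sp -> ell_image s.
Proof.
  intros Hs. destruct (Req_dec s 0) as [->|Hs0]; [apply ell_image_0|].
  destruct (classic (exists s', ell_image s' /\ s <= s')) as [[s' [Hs' Hle]]|Hno].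
  - replace s with ((s / s') * s') by (field; lra).
    apply ell_image_scale; auto. split.
    + apply Rmult_le_pos; [lra|left; apply Rinv_0_lt_compat; lra].
    + apply Rmult_le_reg_r with s'; [lra|]. unfold Rdiv. rewrite Rmult_assoc, Rinv_l; lra.
  - destruct hsp as [_ Hleast].
    assert (sp <= s); [|lra].
    apply Hleast. intros s' Hs'. apply Rnot_lt_le. intros Hlt.
    apply Hno. exists s'. split; auto; lra.
Qed.

(* The bisector points over [sp - sp / 2^n] have Cauchy [tau]-coordinates by the Hölder
   estimate; their limit lies on the bisector since it is closed. *)
Lemma ell_image_sup : ell_image sp.
Proof.
  pose proof sup_pos as Hsp. pose proof norm_perp_pos as Hp.
  destruct inner_bisector_tau_holder as [K [HK Hholder]].
  set (s := fun n => sp - sp / 2 ^ n).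
  assert (Hs : forall n, 0 <= s n < sp) by (intros; apply sub_pow_half_bounds, Hsp).
  assert (Hcv : Un_cv s sp) by apply Un_cv_sub_pow_half.
  assert (Hlift : forall n, inner_bisector N x (lift (s n)) /\ ell (lift (s n)) = s n)
    by (intros; apply lift_spec, ell_image_lt_sup, Hs).
  set (t := fun n => tau (lift (s n))).
  assert (Ht : Cauchy_crit t).
  { apply (Cauchy_crit_of_sqr_le t s K HK).
    - intros n m. destruct (Hlift n) as [Hn En]. destruct (Hlift m) as [Hm Em].
      pose proof (Hholder _ _ Hm Hn) as H. rewrite En, Em in H. exact H.
    - apply CV_Cauchy. exists sp. exact Hcv. }
  destruct (R_complete t Ht) as [t0 Ht0].
  exists (coord sp t0). split; [|apply ell_coord].
  apply inner_bisector_closed. intros eps He.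
  destruct (Hcv (eps / (2 * N perp))) as [n1 Hn1]; [apply Rdiv_lt_0_compat; lra|].
  destruct (Ht0 (eps / 2)) as [n2 Hn2]; [lra|].
  set (n := Nat.max n1 n2).
  specialize (Hn1 n (Nat.le_max_l _ _)). specialize (Hn2 n (Nat.le_max_r _ _)).
  destruct (Hlift n) as [Hn En].
  exists (lift (s n)). split; auto.
  rewrite (coord_ell_tau (lift (s n))), coord_sub, En. fold (t n).
  eapply Rle_lt_trans; [apply norm_coord_le|].
  unfold Rdist in *.
  assert (Rabs (s n - sp) * N perp < eps / 2).
  { apply Rlt_le_trans with (eps / (2 * N perp) * N perp); [apply Rmult_lt_compat_r; lra|].
    right. field. lra. }
  lra.
Qed.

Lemma ell_image_iff s : ell_image s <-> - sp <= s <= sp.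
Proof.
  pose proof sup_pos as Hsp. split.
  - intros Hs. destruct hsp as [Hub _].
    pose proof (Hub _ Hs). pose proof (Hub _ (ell_image_opp _ Hs)). lra.
  - assert (Hnonneg : forall s, 0 <= s <= sp -> ell_image s).
    { intros s' Hs'. destruct (Req_dec s' sp) as [->|Hne]; [apply ell_image_sup|].
      apply ell_image_lt_sup. lra. }
    intros Hs. destruct (Rle_dec 0 s); [apply Hnonneg; lra|].
    replace s with (- - s) by ring. apply ell_image_opp, Hnonneg. lra.
Qed.

Definition curve (u : R) : vec := lift (sp * (2 * u - 1)).
Definition curve_param (z : vec) : R := (ell z / sp + 1) / 2.

Lemma curve_spec u : 0 <= u <= 1 ->
  inner_bisector N x (curve u) /\ ell (curve u) = sp * (2 * u - 1).
Proof.
  intros Hu. pose proof sup_pos. apply lift_spec, ell_image_iff. split; nra.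
Qed.

Lemma curve_param_range z : inner_bisector N x z -> 0 <= curve_param z <= 1.
Proof.
  intros Hz. pose proof sup_pos as Hsp.
  assert (Hell : - sp <= ell z <= sp) by (apply ell_image_iff; exists z; auto).
  unfold curve_param. split.
  - apply Rmult_le_pos; [|lra]. enough (- 1 <= ell z / sp) by lra.
    apply Rmult_le_reg_r with sp; [lra|]. unfold Rdiv. rewrite Rmult_assoc, Rinv_l; lra.
  - enough (ell z / sp <= 1) by lra.
    apply Rmult_le_reg_r with sp; [lra|]. unfold Rdiv. rewrite Rmult_assoc, Rinv_l; lra.
Qed.

Lemma curve_param_curve u : 0 <= u <= 1 -> curve_param (curve u) = u.
Proof.
  intros Hu. pose proof sup_pos. unfold curve_param.
  rewrite (proj2 (curve_spec u Hu)). field. lra.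
Qed.

Lemma curve_curve_param z : inner_bisector N x z -> curve (curve_param z) = z.
Proof.
  intros Hz. pose proof sup_pos.
  destruct (curve_spec _ (curve_param_range z Hz)) as [Hc Ec].
  apply inner_bisector_ell_inj; auto. rewrite Ec. unfold curve_param. field. lra.
Qed.

Lemma curve_continuous t0 : 0 <= t0 <= 1 -> forall eps, 0 < eps -> exists delta, 0 < delta /\
  forall t, 0 <= t <= 1 -> Rabs (t - t0) < delta -> N (vsub (curve t) (curve t0)) < eps.
Proof.
  intros Ht0 eps He. pose proof sup_pos. pose proof norm_perp_pos.
  destruct inner_bisector_tau_holder as [K [HK Hholder]].
  destruct (small_of_lin_sqrt_bound (2 * sp * N perp) (2 * sp * K) eps) as [delta [Hd Hsmall]];
    [nra|nra|auto|].
  exists delta. split; auto. intros t Ht Htd.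
  destruct (curve_spec t Ht) as [Hc Ec]. destruct (curve_spec t0 Ht0) as [Hc0 Ec0].
  assert (Hdiff : Rabs (sp * (2 * t - 1) - sp * (2 * t0 - 1)) = 2 * sp * Rabs (t - t0)).
  { replace (sp * (2 * t - 1) - sp * (2 * t0 - 1)) with (2 * sp * (t - t0)) by ring.
    rewrite Rabs_mult, (Rabs_pos_eq (2 * sp)); lra. }
  pose proof (Hholder _ _ Hc0 Hc) as Htau. rewrite Ec, Ec0, Hdiff in Htau.
  rewrite (coord_ell_tau (curve t)), (coord_ell_tau (curve t0)), coord_sub, Ec, Ec0.
  eapply Rle_lt_trans; [apply norm_coord_le|]. rewrite Hdiff.
  replace (2 * sp * Rabs (t - t0) * N perp) with (2 * sp * N perp * Rabs (t - t0)) by ring.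
  apply Hsmall; auto. rewrite <- Rmult_assoc, (Rmult_comm K) in Htau. exact Htau.
Qed.

Lemma curve_param_continuous z0 : inner_bisector N x z0 -> forall eps, 0 < eps ->
  exists delta, 0 < delta /\ forall z, inner_bisector N x z -> N (vsub z z0) < delta ->
    Rabs (curve_param z - curve_param z0) < eps.
Proof.
  intros _ eps He. pose proof sup_pos as Hsp.
  destruct ell_bounded as [C [HC Hell]].
  exists (eps * (2 * sp) / C). split; [apply Rdiv_lt_0_compat; nra|].
  intros z _ Hz.
  replace (curve_param z - curve_param z0) with (ell (vsub z z0) / (2 * sp))
    by (unfold curve_param; rewrite ell_sub; field; lra).
  unfold Rdiv. rewrite Rabs_mult, (Rabs_pos_eq (/ (2 * sp))) by (left; apply Rinv_0_lt_compat; lra).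
  apply Rmult_lt_reg_r with (2 * sp); [lra|].
  rewrite Rmult_assoc, Rinv_l by lra.
  apply Rle_lt_trans with (C * N (vsub z z0)); [rewrite Rmult_1_r; apply Hell|].
  apply Rmult_lt_reg_l with (/ C); [apply Rinv_0_lt_compat; lra|].
  rewrite <- Rmult_assoc, Rinv_l, Rmult_1_l by lra. unfold Rdiv in Hz. lra.
Qed.

Lemma inner_bisector_homeomorphic : homeomorphic_to_unit_interval N (inner_bisector N x).
Proof.
  exists curve, curve_param.
  split; [intros; apply curve_spec; auto|].
  split; [exact curve_param_range|].
  split; [exact curve_param_curve|].
  split; [exact curve_curve_param|].
  split; [exact curve_continuous|exact curve_param_continuous].
Qed.

End Sup.
End NormedPlane.

Theorem proposition4p1 (N : vec -> R) (HN : is_norm N) (x : vec)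
  (hx : unit_circle N x) :
  homeomorphic_to_unit_interval N (inner_bisector N x).
Proof.
  destruct (completeness (ell_image N x)) as [sp hsp].
  - exact (ell_image_bound N HN x hx).
  - exists 0. exact (ell_image_0 N HN x hx).
  - exact (inner_bisector_homeomorphic N HN x hx sp hsp).
Qed.
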